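(* Let $n,m$ be integers with $1\le n\le m$ and let $(G,\sigma)$ be a signed graph with $G=P_n\,\square\,P_m$ (a signed grid). Then $\chi_s(G,\sigma)\le 6$. If $n\le 4$, then $\chi_s(G,\sigma)\le 5$. Moreover, there exist signed grids (signed graphs whose underlying graph is $P_n\,\square\,P_m$ for some $n,m$) with chromatic number $5$.
   Context: A signed graph $(G,\sigma)$ is a simple loopless undirected graph $G$ with a signature $\sigma:E(G)\to\{+1,-1\}$. Switching a vertex $v$ negates the sign of every edge incident to $v$; two signatures are equivalent if one is obtained from the other by switching a set of vertices. A homomorphism of $(G,\sigma)$ to $(H,\pi)$ is a graph homomorphism $\varphi:G\to H$ for which there is a signature $\sigma'$ equivalent to $\sigma$ with $\pi(\varphi(u)\varphi(v))=\sigma'(uv)$ for every edge $uv$ of $G$. $\chi_s(G,\sigma)$ is the smallest order of a signed graph to which $(G,\sigma)$ admits a homomorphism. $P_n$ is the path on $n$ vertices and $\square$ is the Cartesian product of graphs. *)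

From Stdlib Require Import ClassicalEpsilon.
From mathcomp Require Import all_boot.
Set Implicit Arguments. Unset Strict Implicit. Unset Printing Implicit Defensive.

Definition simple_graph (T : finType) (e : rel T) : Prop :=
  symmetric e /\ irreflexive e.

(* A signature on the edges of (T, e): s u v = true means the edge uv is
   negative (sign -1), false means positive (+1). *)
Definition signature_on (T : finType) (e : rel T) (s : rel T) : Prop :=
  forall u v, e u v -> s u v = s v u.

Definition switch (T : finType) (S : {set T}) (s : rel T) : rel T :=
  fun u v => s u v (+) (u \in S) (+) (v \in S).

Definition signed_hom (T U : finType) (eG : rel T) (sigma : rel T)
    (eH : rel U) (pi : rel U) (phi : T -> U) : Prop :=
  exists S : {set T}, forall u v, eG u v ->
    eH (phi u) (phi v) /\ pi (phi u) (phi v) = switch S sigma u v.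

(* (G, sigma) admits a homomorphism to some signed graph of order k
   (vertex set 'I_k, up to isomorphism any graph of order k). *)
Definition hom_to_order (T : finType) (eG sigma : rel T) (k : nat) : Prop :=
  exists (eH piH : rel 'I_k), simple_graph eH /\ signature_on eH piH /\
    exists phi : T -> 'I_k, signed_hom eG sigma eH piH phi.

Definition hom_to_order_b (T : finType) (eG sigma : rel T) : pred nat :=
  fun k => if excluded_middle_informative (hom_to_order eG sigma k)
           then true else false.

(* chi_s(G, sigma): smallest order of a signed graph to which (G, sigma)
   admits a homomorphism (0 if none exists, which never happens for
   a simple graph with a signature). *)
Definition chi_s (T : finType) (eG sigma : rel T) : nat :=
  match excluded_middle_informative (exists k, hom_to_order_b eG sigma k) with
  | left h => ex_minn h
  | right _ => 0
  end.

Definition grid_adj (n m : nat) : rel ('I_n * 'I_m) :=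
  fun x y =>
    ((x.1 == y.1) && (((val x.2).+1 == val y.2) || ((val y.2).+1 == val x.2)))
    || ((x.2 == y.2) && (((val x.1).+1 == val y.1) || ((val y.1).+1 == val x.1))).
Arguments grid_adj : clear implicits.

From Stdlib Require Import ClassicalEpsilon.
From mathcomp Require Import all_boot.

Set Implicit Arguments.
Unset Strict Implicit.
Unset Printing Implicit Defensive.

(** The cycle space of a grid is spanned by its 4-faces, so two signatures of
    a grid are switching equivalent iff they give every face the same sign.
    Hence (G, sigma) maps to a signed complete graph (K_k, P) iff G has a
    proper k-colouring c such that the signature P (c u) (c v) gives every
    face its sign under sigma; such colourings are built column by column.
    In the signed K_6 whose negative edges are the diagonals of the pentagon
    0..4, for any distinct colours u, l and any third colour a there are
    colours z outside {u, l, a} with either parity of P u z + P l z, so each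
    new column can be chosen greedily row by row.  For the signed K_5 with
    negative edges 14, 23, 34 a finite check shows that every proper column of
    height 4 can be followed by another one whatever the signs of the three
    faces between them.  Conversely, an exhaustive search over the 64
    signatures of K_4 shows that the 3 x 4 grid whose only positive face is
    the middle one of its top row has no such 4-colouring. *)

Section SignedChromaticNumber.
Variables (T : finType) (eG sigma : rel T).

Lemma hom_to_order_bP k : reflect (hom_to_order eG sigma k) (hom_to_order_b eG sigma k).
Proof. by rewrite /hom_to_order_b; case: excluded_middle_informative => h; constructor. Qed.

Lemma chi_s_le k : hom_to_order eG sigma k -> chi_s eG sigma <= k.
Proof.
move=> /hom_to_order_bP hk; rewrite /chi_s.
case: excluded_middle_informative => [ex | []]; last by exists k.
by case: ex_minnP => l _; apply.
Qed.

Lemma chi_s_minimal k :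
  hom_to_order eG sigma k -> (forall l, l < k -> ~ hom_to_order eG sigma l) ->
  chi_s eG sigma = k.
Proof.
move=> hk k_min; apply/eqP; rewrite eqn_leq chi_s_le //= /chi_s.
case: excluded_middle_informative => [ex | []]; last by exists k; apply/hom_to_order_bP.
case: ex_minnP => l /hom_to_order_bP hl _; rewrite leqNgt; apply/negP => /k_min; exact.
Qed.

End SignedChromaticNumber.

Lemma iota_allP k (p : pred nat) : reflect (forall i, i < k -> p i) (all p (iota 0 k)).
Proof.
apply: (iffP allP) => [p_all i lt_ik | p_lt i]; first by apply: p_all; rewrite mem_iota.
by rewrite mem_iota => /andP[_ lt_ik]; apply: p_lt.
Qed.

Definition unordered (N : rel nat) : rel nat := fun a b => N (minn a b) (maxn a b).

Lemma unordered_sym N : symmetric (unordered N).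
Proof. by move=> a b; rewrite /unordered minnC maxnC. Qed.

Lemma unorderedE N a b : a <= b -> unordered N a b = N a b.
Proof. by move=> le_ab; rewrite /unordered (minn_idPl le_ab) (maxn_idPr le_ab). Qed.

Definition lift_sign k (pi : rel 'I_k) : rel nat :=
  unordered (fun a b =>
    if (insub a : option 'I_k) is Some x then
      if (insub b : option 'I_k) is Some y then pi x y else false
    else false).

Lemma lift_signE k (e pi : rel 'I_k) (x y : 'I_k) :
  signature_on e pi -> e x y -> lift_sign pi x y = pi x y.
Proof.
move=> pi_sym exy; rewrite /lift_sign.
have [le_xy | /ltnW le_yx] := leqP x y; first by rewrite unorderedE // !valK.
by rewrite unordered_sym unorderedE // !valK (pi_sym _ _ exy).
Qed.

(** * Colourings of grids, column by column *)

(** [c i j] is the colour of the vertex in row [i] and column [j], so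
    [c^~ j] is column [j]. *)

Definition face_between (P : rel nat) (x y : nat -> nat) (i : nat) : bool :=
  P (x i) (x i.+1) (+) P (y i) (y i.+1) (+) P (x i) (y i) (+) P (x i.+1) (y i.+1).

Definition proper_column (h : nat) (x : nat -> nat) : bool :=
  all (fun i => x i != x i.+1) (iota 0 h.-1).

Definition column_step (P : rel nat) (h : nat) (x y : nat -> nat) (f : nat -> bool) : bool :=
  all (fun i => x i != y i) (iota 0 h) &&
  all (fun i => face_between P x y i == f i) (iota 0 h.-1).

Definition grid_colouring (P : rel nat) (k n m : nat) (F : nat -> nat -> bool)
    (c : nat -> nat -> nat) : Prop :=
  [/\ forall i j, i < n -> j < m -> c i j < k,
      forall j, j < m -> proper_column n (c^~ j) &
      forall j, j.+1 < m -> column_step P n (c^~ j) (c^~ j.+1) (F^~ j)].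

Lemma proper_column_le h h' x : h' <= h -> proper_column h x -> proper_column h' x.
Proof.
move=> le_h /iota_allP x_proper; apply/iota_allP => i; rewrite ltn_predRL => lt_ih.
by apply: x_proper; rewrite ltn_predRL (leq_trans lt_ih le_h).
Qed.

Lemma column_step_le P h h' x y f :
  h' <= h -> column_step P h x y f -> column_step P h' x y f.
Proof.
move=> le_h /andP[/iota_allP xy_neq /iota_allP xy_faces].
apply/andP; split; apply/iota_allP => i lt_ih.
  exact/xy_neq/(leq_trans lt_ih le_h).
by rewrite ltn_predRL in lt_ih; apply: xy_faces; rewrite ltn_predRL (leq_trans lt_ih le_h).
Qed.

Lemma eq_proper_column h x x' :
  (forall i, i < h -> x i = x' i) -> proper_column h x = proper_column h x'.
Proof.
move=> ex; apply: eq_in_all => i; rewrite mem_iota ltn_predRL => /= lt_ih.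
by rewrite !ex // ltnW.
Qed.

Lemma eq_column_step P h x x' y y' f f' :
  (forall i, i < h -> x i = x' i) -> (forall i, i < h -> y i = y' i) ->
  (forall i, i.+1 < h -> f i = f' i) ->
  column_step P h x y f = column_step P h x' y' f'.
Proof.
move=> ex ey ef; congr (_ && _); apply: eq_in_all => i; rewrite mem_iota /=.
  by move=> lt_ih; rewrite ex ?ey.
rewrite ltn_predRL => lt_ih.
by rewrite /face_between !ex ?ey ?ef ?(ltnW lt_ih).
Qed.

Lemma grid_colouring_widen P k k' n m F c :
  k <= k' -> grid_colouring P k n m F c -> grid_colouring P k' n m F c.
Proof.
move=> le_k [c_lt c_proper c_step]; split=> // i j lt_in lt_jm.
by rewrite (leq_trans (c_lt _ _ lt_in lt_jm)).
Qed.

Lemma grid_colouring_eq_sign P Q k n m F c :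
  (forall a b, a < k -> b < k -> a != b -> Q a b = P a b) ->
  grid_colouring P k n m F c -> grid_colouring Q k n m F c.
Proof.
move=> QP [c_lt c_proper c_step]; split=> // j lt_jm.
have /andP[c_neq /iota_allP c_faces] := c_step j lt_jm; rewrite /column_step c_neq /=.
apply/iota_allP => i lt_in; move: (c_faces i lt_in); rewrite ltn_predRL in lt_in.
have lt_i := ltnW lt_in; have lt_j := ltnW lt_jm.
have /iota_allP down_j := c_proper j lt_j; have /iota_allP down_j' := c_proper j.+1 lt_jm.
move/iota_allP: c_neq => right.
by rewrite /face_between !QP ?c_lt ?down_j ?down_j' ?right ?ltn_predRL.
Qed.

Lemma grid_colouring_eq_faces P k n m F F' c :
  (forall i j, i.+1 < n -> j.+1 < m -> F i j = F' i j) ->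
  grid_colouring P k n m F c -> grid_colouring P k n m F' c.
Proof.
move=> FF' [c_lt c_proper c_step]; split=> // j lt_jm.
have FF'_j i : i.+1 < n -> F i j = F' i j by move=> lt_in; apply: FF'.
by rewrite -(eq_column_step _ (fun _ _ => erefl) (fun _ _ => erefl) FF'_j) c_step.
Qed.

(** * Faces determine the switching class of a grid signature *)

Definition face (s : nat -> nat -> nat -> nat -> bool) (i j : nat) : bool :=
  s i j i.+1 j (+) s i j.+1 i.+1 j.+1 (+) s i j i j.+1 (+) s i.+1 j i.+1 j.+1.

Lemma face_addb (s t : nat -> nat -> nat -> nat -> bool) i j :
  face (fun i j i' j' => s i j i' j' (+) t i j i' j') i j = face s i j (+) face t i j.
Proof. by rewrite /face; do 4 case: (s _ _ _ _); do 4 case: (t _ _ _ _). Qed.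

(** When [d] is the difference of two signatures with the
    same face signs, the set where it is [true] switches one into the other. *)
Definition potential (d : nat -> nat -> nat -> nat -> bool) (i j : nat) : bool :=
  (\big[addb/false]_(l < j) d 0 l 0 l.+1) (+) \big[addb/false]_(l < i) d l j l.+1 j.

Lemma potential_down d i j : potential d i.+1 j = potential d i j (+) d i j i.+1 j.
Proof. by rewrite /potential big_ord_recr addbA. Qed.

Section Grid.
Variables n m : nat.
Local Notation vertex := ('I_n * 'I_m)%type.

Lemma grid_adj_right (a : 'I_n) (b b' : 'I_m) : b.+1 = b' -> grid_adj n m (a, b) (a, b').
Proof. by move=> e; rewrite /grid_adj /= e !eqxx. Qed.

Lemma grid_adj_down (a a' : 'I_n) (b : 'I_m) : a.+1 = a' -> grid_adj n m (a, b) (a', b).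
Proof. by move=> e; rewrite /grid_adj /= e !eqxx orbT. Qed.

Lemma grid_adj_ind (R : vertex -> vertex -> Prop) :
  (forall u v, grid_adj n m u v -> R u v -> R v u) ->
  (forall (a : 'I_n) (b b' : 'I_m), b.+1 = b' -> R (a, b) (a, b')) ->
  (forall (a a' : 'I_n) (b : 'I_m), a.+1 = a' -> R (a, b) (a', b)) ->
  forall u v, grid_adj n m u v -> R u v.
Proof.
move=> R_sym R_right R_down [a b] [a' b'].
by case/orP => /andP[/eqP/= <- /orP[]/eqP e];
  [ exact: R_right | exact: R_sym (grid_adj_right _ e) (R_right _ _ _ e)
  | exact: R_down | exact: R_sym (grid_adj_down _ e) (R_down _ _ _ e)].
Qed.

(** Junk value [d] outside the grid. *)
Definition at_vertex (A : Type) (d : A) (f : vertex -> A) (i j : nat) : A :=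
  if (insub i : option 'I_n) is Some a then
    if (insub j : option 'I_m) is Some b then f (a, b) else d
  else d.

Lemma at_vertex_ord A (d : A) f (a : 'I_n) (b : 'I_m) : at_vertex d f a b = f (a, b).
Proof. by rewrite /at_vertex !valK. Qed.

Definition sign_at (sigma : rel vertex) (i j i' j' : nat) : bool :=
  at_vertex false (fun u => at_vertex false (sigma u) i' j') i j.

Lemma sign_at_ord sigma (a a' : 'I_n) (b b' : 'I_m) :
  sign_at sigma a b a' b' = sigma (a, b) (a', b').
Proof. by rewrite /sign_at !at_vertex_ord. Qed.

Definition face_sign (sigma : rel vertex) : nat -> nat -> bool := face (sign_at sigma).

Lemma face_sign_ord sigma (a a' : 'I_n) (b b' : 'I_m) : a.+1 = a' -> b.+1 = b' ->
  face_sign sigma a b = sigma (a, b) (a', b) (+) sigma (a, b') (a', b')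
                        (+) sigma (a, b) (a, b') (+) sigma (a', b) (a', b').
Proof. by move=> ea eb; rewrite /face_sign /face ea eb !sign_at_ord. Qed.

Lemma potential_right d :
  (forall i j, i.+1 < n -> j.+1 < m -> face d i j = false) ->
  forall i j, i < n -> j.+1 < m -> potential d i j (+) potential d i j.+1 = d i j i j.+1.
Proof.
move=> d_faces; elim=> [|i IH] j lt_in lt_jm.
  by rewrite /potential !big_ord0 !addbF big_ord_recr addKb.
rewrite !potential_down addbACA IH ?(ltnW lt_in) //.
move: (d_faces i j lt_in lt_jm); rewrite /face.
by do 4 case: (d _ _ _ _).
Qed.

Lemma grid_switchingP sigma tau :
  signature_on (grid_adj n m) sigma -> signature_on (grid_adj n m) tau ->
  (exists S : {set vertex}, forall u v, grid_adj n m u v -> tau u v = switch S sigma u v) <->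
  (forall i j, i.+1 < n -> j.+1 < m -> face_sign tau i j = face_sign sigma i j).
Proof.
move=> sigma_sym tau_sym; split=> [[S tauS] i j lt_in lt_jm | faces].
  pose a := Ordinal (ltnW lt_in); pose a' := Ordinal lt_in.
  pose b := Ordinal (ltnW lt_jm); pose b' := Ordinal lt_jm.
  rewrite (face_sign_ord tau (a := a) (a' := a') (b := b) (b' := b')) //.
  rewrite (face_sign_ord sigma (a := a) (a' := a') (b := b) (b' := b')) //.
  rewrite !tauS ?grid_adj_down ?grid_adj_right // /switch.
  by do 4 case: (_ \in S); do 4 case: (sigma _ _).
pose d i j i' j' := sign_at sigma i j i' j' (+) sign_at tau i j i' j'.
have d_faces i j : i.+1 < n -> j.+1 < m -> face d i j = false.
  by move=> lt_in lt_jm; rewrite face_addb [face (sign_at tau) _ _]faces // addbb.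
exists [set u : vertex | potential d u.1 u.2].
apply: grid_adj_ind => [u v uv tau_uv | a b b' e | a a' b e].
- by rewrite -tau_sym // tau_uv /switch sigma_sym // addbAC.
- rewrite /switch !inE /= -(sign_at_ord tau) -(sign_at_ord sigma) -e -addbA.
  by rewrite potential_right ?addKb // e.
- rewrite /switch !inE /= -(sign_at_ord tau) -(sign_at_ord sigma) -e.
  by rewrite potential_down -addbA addKb addKb.
Qed.

Definition pull (P : rel nat) (c : nat -> nat -> nat) : rel vertex :=
  fun u v => P (c u.1 u.2) (c v.1 v.2).

Lemma pull_signature P c : symmetric P -> signature_on (grid_adj n m) (pull P c).
Proof. by move=> P_sym u v _; apply: P_sym. Qed.

Lemma face_sign_pull P c i j : i.+1 < n -> j.+1 < m ->
  face_sign (pull P c) i j = face_between P (c^~ j) (c^~ j.+1) i.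
Proof.
move=> lt_in lt_jm.
exact: (face_sign_ord _ (a := Ordinal (ltnW lt_in)) (a' := Ordinal lt_in)
                        (b := Ordinal (ltnW lt_jm)) (b' := Ordinal lt_jm)).
Qed.

Lemma grid_hom_of_colouring sigma P k c :
  signature_on (grid_adj n m) sigma -> symmetric P ->
  grid_colouring P k n m (face_sign sigma) c -> hom_to_order (grid_adj n m) sigma k.
Proof.
move=> sigma_sym P_sym [c_lt c_proper c_step].
have [S pullS] : exists S : {set vertex},
    forall u v, grid_adj n m u v -> pull P c u v = switch S sigma u v.
  apply/(grid_switchingP sigma_sym (pull_signature c P_sym)) => i j lt_in lt_jm.
  have /andP[_ /iota_allP c_faces] := c_step j lt_jm.
  by rewrite face_sign_pull //; apply/eqP/c_faces; rewrite ltn_predRL.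
have c_neq : forall u v, grid_adj n m u v -> c u.1 u.2 != c v.1 v.2.
  apply: grid_adj_ind => [u v _ | a b b' e | a a' b e]; first by rewrite eq_sym.
  - have lt_bm : b.+1 < m by rewrite e.
    have /andP[/iota_allP c_neq _] := c_step b lt_bm.
    by rewrite /= -e; apply: c_neq.
  - have /iota_allP c_neq := c_proper b (ltn_ord b).
    by rewrite /= -e; apply: c_neq; rewrite ltn_predRL e.
exists (fun x y : 'I_k => x != y), (fun x y : 'I_k => P x y).
split; first by split=> [x y | x]; rewrite ?eqxx // eq_sym.
split; first by move=> x y _; apply: P_sym.
exists (fun u : vertex => Ordinal (c_lt u.1 u.2 (ltn_ord u.1) (ltn_ord u.2))), S => u v uv.
by split; [exact: c_neq | exact: pullS].
Qed.

Lemma grid_colouring_of_hom sigma k :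
  signature_on (grid_adj n m) sigma -> hom_to_order (grid_adj n m) sigma k ->
  exists2 P, symmetric P & exists c, grid_colouring P k n m (face_sign sigma) c.
Proof.
move=> sigma_sym [eH [piH [[_ eH_irr] [piH_sym [phi [S phiS]]]]]].
pose c := at_vertex 0 (fun u => val (phi u)).
have cE (u : vertex) : c u.1 u.2 = phi u by case: u => a b; rewrite /c at_vertex_ord.
have c_neq u v : grid_adj n m u v -> c u.1 u.2 != c v.1 v.2.
  move=> uv; rewrite !cE val_eqE; apply: contraTneq (phiS u v uv).1 => ->.
  by rewrite eH_irr.
have pullS u v : grid_adj n m u v -> pull (lift_sign piH) c u v = switch S sigma u v.
  by move=> uv; have [eH_uv <-] := phiS u v uv; rewrite /pull !cE (lift_signE piH_sym).
have c_faces := (grid_switchingP sigma_sym (pull_signature c (unordered_sym _))).1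
                  (ex_intro _ S pullS).
exists (lift_sign piH); first exact: unordered_sym.
exists c; split=> [i j lt_in lt_jm | j lt_jm | j lt_jm].
- by move: (ltn_ord (phi (Ordinal lt_in, Ordinal lt_jm))); rewrite -cE.
- apply/iota_allP => i; rewrite ltn_predRL => lt_in.
  exact: (c_neq (Ordinal (ltnW lt_in), Ordinal lt_jm) (Ordinal lt_in, Ordinal lt_jm)
                (grid_adj_down _ _)).
- apply/andP; split; apply/iota_allP => i lt_in.
    exact: (c_neq (Ordinal lt_in, Ordinal (ltnW lt_jm)) (Ordinal lt_in, Ordinal lt_jm)
                  (grid_adj_right _ _)).
  by rewrite ltn_predRL in lt_in; rewrite -face_sign_pull // c_faces.
Qed.

End Grid.

(** * Six colours suffice *)

Definition first_in (k : nat) (p : pred nat) : nat := find p (iota 0 k).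

Lemma first_inP k (p : pred nat) : has p (iota 0 k) -> first_in k p < k /\ p (first_in k p).
Proof.
move=> has_p; have lt_k : first_in k p < k by rewrite -{2}(size_iota 0 k) -has_find.
by split=> //; have := nth_find 0 has_p; rewrite nth_iota.
Qed.

Lemma fresh_colour a b : has (fun z => (z != a) && (z != b)) (iota 0 3).
Proof. by case: a b => [|[|[|a]]] [|[|[|b]]]. Qed.

Definition K6_sign : rel nat :=
  unordered (fun a b => (b < 5) && ((b - a == 2) || (b - a == 3))).

Lemma K6_extension w l u a r : w < 6 -> l < 6 -> u < 6 -> a < 6 -> u != l ->
  has (fun z => [&& z != u, z != l, z != a &
                 K6_sign w l (+) K6_sign u z (+) K6_sign w u (+) K6_sign l z == r])
      (iota 0 6).
Proof.
have K6_ok : all (fun w => all (fun l => all (fun u => all (fun a => (u != l) ==>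
    all (fun r => has (fun z => [&& z != u, z != l, z != a &
       K6_sign w l (+) K6_sign u z (+) K6_sign w u (+) K6_sign l z == r]) (iota 0 6))
      [:: false; true]) (iota 0 6)) (iota 0 6)) (iota 0 6)) (iota 0 6).
  by vm_compute.
move=> lt_w lt_l lt_u lt_a ul; move: K6_ok => /iota_allP/(_ w lt_w)/iota_allP/(_ l lt_l).
move=> /iota_allP/(_ u lt_u)/iota_allP/(_ a lt_a).
by rewrite ul => /allP/(_ r); apply; case: r.
Qed.

(** Row [i] of the new column also avoids [x i.+1], so that [K6_extension]
    applies to the next row. *)
Fixpoint K6_extend (x : nat -> nat) (f : nat -> bool) (i : nat) : nat :=
  if i is i'.+1 then
    let y := K6_extend x f i' in
    first_in 6 (fun z => [&& z != y, z != x i, z != x i.+1 &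
      K6_sign (x i') (x i) (+) K6_sign y z (+) K6_sign (x i') y (+) K6_sign (x i) z == f i'])
  else first_in 3 (fun z => (z != x 0) && (z != x 1)).

Section K6Extension.
Variables (x : nat -> nat) (f : nat -> bool).
Hypothesis x_lt : forall i, x i < 6.

Lemma K6_extend_fresh i :
  [&& K6_extend x f i < 6, K6_extend x f i != x i & K6_extend x f i != x i.+1].
Proof.
elim: i => [|i /and3P[y_lt _ y_neq]] /=.
  by have [lt3 ->] := first_inP (fresh_colour (x 0) (x 1)); rewrite (leq_trans lt3).
have [lt6 /and4P[_ -> -> _]] := first_inP (K6_extension (f i) (x_lt i) (x_lt i.+1) y_lt
                                                          (x_lt i.+2) y_neq).
by rewrite lt6.
Qed.

Lemma K6_extend_step i :
  K6_extend x f i != K6_extend x f i.+1 /\ face_between K6_sign x (K6_extend x f) i = f i.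
Proof.
have /and3P[y_lt _ y_neq] := K6_extend_fresh i.
have [_ /and4P[z_neq _ _ /eqP z_face]] := first_inP (K6_extension (f i) (x_lt i)
                                           (x_lt i.+1) y_lt (x_lt i.+2) y_neq).
by split; first rewrite eq_sym.
Qed.

End K6Extension.

Fixpoint K6_column (F : nat -> nat -> bool) (j : nat) : nat -> nat :=
  if j is j'.+1 then K6_extend (K6_column F j') (F^~ j') else fun i => odd i.

Lemma K6_column_lt F j i : K6_column F j i < 6.
Proof.
elim: j i => [|j IH] i /=; first by case: odd.
by case/and3P: (K6_extend_fresh (F^~ j) IH i).
Qed.

Lemma K6_colouring F n m : grid_colouring K6_sign 6 n m F (fun i j => K6_column F j i).
Proof.
split=> [i j _ _ | [|j] _ | j _]; first exact: K6_column_lt.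
- by apply/iota_allP => i _ /=; case: odd.
- by apply/iota_allP => i _; case: (K6_extend_step (F^~ j) (K6_column_lt F j) i).
- apply/andP; split; apply/iota_allP => i _.
    by case/and3P: (K6_extend_fresh (F^~ j) (K6_column_lt F j) i); rewrite eq_sym.
  by case: (K6_extend_step (F^~ j) (K6_column_lt F j) i) => _ ->.
Qed.

(** * Five colours for grids with at most four rows *)

Fixpoint words (T : Type) (s : seq T) (h : nat) : seq (seq T) :=
  if h is h'.+1 then [seq a :: w | a <- s, w <- words s h'] else [:: [::]].

Lemma mem_words (T : eqType) (s : seq T) h w :
  (w \in words s h) = (size w == h) && all (mem s) w.
Proof.
elim: h w => [|h IH] [|a w] //=; first by apply/allpairsP => -[[b v] []].
apply/allpairsP/and3P => [[[b v] /= [b_in v_in [-> ->]]] | [/eqP[size_w] a_in w_in]].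
  by move: v_in; rewrite IH => /andP[/eqP-> ->]; rewrite b_in.
by exists (a, w); rewrite IH size_w eqxx.
Qed.

Definition proper_columns h k : seq (seq nat) :=
  [seq x <- words (iota 0 k) h | proper_column h (nth 0 x)].

Lemma proper_columnsP h k x :
  x \in proper_columns h k ->
  (forall i, i < h -> nth 0 x i < k) /\ proper_column h (nth 0 x).
Proof.
rewrite mem_filter mem_words => /and3P[x_proper /eqP size_x /allP x_lt].
split=> // i lt_ih; move: (x_lt (nth 0 x i)).
by rewrite mem_nth ?size_x // => /(_ isT); rewrite inE mem_iota.
Qed.

Definition extendable P h k : bool :=
  all (fun x => all (fun f =>
         has (fun y => column_step P h (nth 0 x) (nth 0 y) (nth false f)) (proper_columns h k))
       (words [:: false; true] h.-1))
    (proper_columns h k).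

Section ExtendableColumns.
Variables (P : rel nat) (h k : nat).
Hypothesis P_extendable : extendable P h k.

Definition next_column (x : seq nat) (f : nat -> bool) : seq nat :=
  nth x (proper_columns h k)
    (find (fun y => column_step P h (nth 0 x) (nth 0 y) f) (proper_columns h k)).

Lemma next_columnP (x : seq nat) f : x \in proper_columns h k ->
  next_column x f \in proper_columns h k /\
  column_step P h (nth 0 x) (nth 0 (next_column x f)) f.
Proof.
move=> x_in.
have has_step : has (fun y => column_step P h (nth 0 x) (nth 0 y) f) (proper_columns h k).
  have f_in : mkseq f h.-1 \in words [:: false; true] h.-1.
    by rewrite mem_words size_mkseq eqxx; apply/allP => -[].
  have f_agree i : i.+1 < h -> nth false (mkseq f h.-1) i = f i.
    by rewrite -ltn_predRL; apply: nth_mkseq.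
  have := P_extendable; move/allP/(_ x x_in)/allP/(_ _ f_in); apply: sub_has => y.
  by rewrite (eq_column_step _ (fun _ _ => erefl) (fun _ _ => erefl) f_agree).
by split; [rewrite mem_nth // -has_find | have := nth_find x has_step].
Qed.

Fixpoint column_walk (x0 : seq nat) (F : nat -> nat -> bool) (j : nat) : seq nat :=
  if j is j'.+1 then next_column (column_walk x0 F j') (F^~ j') else x0.

Lemma extendable_colouring x0 n m F : x0 \in proper_columns h k -> n <= h ->
  grid_colouring P k n m F (fun i j => nth 0 (column_walk x0 F j) i).
Proof.
move=> x0_in le_nh.
have walk_in j : column_walk x0 F j \in proper_columns h k.
  by elim: j => [|j IH] //=; case: (next_columnP (F^~ j) IH).
split=> [i j lt_in _ | j _ | j _].
- by case/proper_columnsP: (walk_in j) => x_lt _; rewrite x_lt // (leq_trans lt_in).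
- by case/proper_columnsP: (walk_in j) => _; apply: proper_column_le.
- by case: (next_columnP (F^~ j) (walk_in j)) => _; apply: column_step_le.
Qed.

End ExtendableColumns.

Definition K5_sign : rel nat :=
  unordered (fun a b => [|| (a == 1) && (b == 4), (a == 2) && (b == 3) | (a == 3) && (b == 4)]).

Lemma K5_extendable : extendable K5_sign 4 5.
Proof. by vm_compute. Qed.

Lemma K5_grid_hom n m (sigma : rel ('I_n * 'I_m)) :
  n <= 4 -> signature_on (grid_adj n m) sigma -> hom_to_order (grid_adj n m) sigma 5.
Proof.
move=> le_n4 sigma_sym; apply: grid_hom_of_colouring sigma_sym (unordered_sym _) _.
exact: (extendable_colouring K5_extendable (x0 := [:: 0; 1; 0; 1])).
Qed.

(** * A grid that needs five colours *)

(** The [let] makes [vm_compute] evaluate the previous step once, not once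
    per candidate column. *)
Fixpoint reachable P h k (F : nat -> nat -> bool) (j : nat) : seq (seq nat) :=
  if j is j'.+1 then
    let R := reachable P h k F j' in
    [seq y <- proper_columns h k | has (fun x => column_step P h (nth 0 x) (nth 0 y) (F^~ j')) R]
  else proper_columns h k.

Lemma reachable_colouring P k n m F c : grid_colouring P k n m F c ->
  forall j, j < m -> mkseq (c^~ j) n \in reachable P n k F j.
Proof.
move=> [c_lt c_proper c_step].
have col_nth j i : i < n -> nth 0 (mkseq (c^~ j) n) i = c i j by apply: nth_mkseq.
have col_in j : j < m -> mkseq (c^~ j) n \in proper_columns n k.
  move=> lt_jm; rewrite mem_filter mem_words size_mkseq eqxx (eq_proper_column (col_nth j)).
  rewrite c_proper //=; apply/allP => a /mapP[i]; rewrite mem_iota add0n => /= lt_in ->.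
  by rewrite mem_iota add0n c_lt.
elim=> [|j IH] lt_jm /=; first exact: col_in.
rewrite mem_filter col_in // andbT; apply/hasP; exists (mkseq (c^~ j) n); first exact/IH/ltnW.
by rewrite (eq_column_step _ (col_nth j) (col_nth j.+1) (fun _ _ => erefl)) c_step.
Qed.

Definition complete_edges k : seq (nat * nat) :=
  [seq e <- [seq (a, b) | a <- iota 0 k, b <- iota 0 k] | e.1 < e.2].

(** [E] is bound outside the relation so that [vm_compute] builds it once. *)
Definition mask_signature k (q : seq bool) : rel nat :=
  let E := mask q (complete_edges k) in unordered (fun a b => (a, b) \in E).

Lemma mask_signatureE P k : symmetric P -> forall a b, a < k -> b < k -> a != b ->
  mask_signature k [seq P e.1 e.2 | e <- complete_edges k] a b = P a b.
Proof.
move=> P_sym a b lt_ak lt_bk; set q := [seq P e.1 e.2 | e <- complete_edges k].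
have qE x y : x < y -> x < k -> y < k -> mask_signature k q x y = P x y.
  move=> lt_xy lt_xk lt_yk; rewrite /mask_signature unorderedE ?(ltnW lt_xy) // -filter_mask.
  have xy_in : (x, y) \in [seq (a, b) | a <- iota 0 k, b <- iota 0 k].
    by apply: allpairs_f; rewrite mem_iota add0n.
  by rewrite !mem_filter /= lt_xy xy_in !andbT.
case: ltngtP => [lt_ab _ | lt_ba _ | -> /eqP //]; first exact: qE.
by rewrite /mask_signature unordered_sym P_sym; apply: qE.
Qed.

Lemma grid_hom_lower_bound n m (sigma : rel ('I_n * 'I_m)) F k :
  signature_on (grid_adj n m) sigma -> 0 < m ->
  (forall i j, i.+1 < n -> j.+1 < m -> face_sign sigma i j = F i j) ->
  (forall q, q \in words [:: false; true] (size (complete_edges k)) ->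
     reachable (mask_signature k q) n k F m.-1 = [::]) ->
  forall l, l <= k -> ~ hom_to_order (grid_adj n m) sigma l.
Proof.
move=> sigma_sym m_gt0 sigma_faces unreachable l le_lk /(grid_colouring_of_hom sigma_sym).
move=> [P P_sym [c /(grid_colouring_widen le_lk)/(grid_colouring_eq_faces sigma_faces) c_col]].
pose q := [seq P e.1 e.2 | e <- complete_edges k].
have q_in : q \in words [:: false; true] (size (complete_edges k)).
  by rewrite mem_words size_map eqxx; apply/allP => -[].
have := reachable_colouring (grid_colouring_eq_sign (mask_signatureE P_sym) c_col).
by move=> /(_ m.-1); rewrite unreachable // ltn_predL => /(_ m_gt0).
Qed.

Definition grid_example : rel ('I_3 * 'I_4) := fun u v =>
  (u.1 == v.1) && ((u.1 : nat, minn u.2 v.2) \in [:: (1, 0); (1, 2); (2, 1)]).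

Lemma grid_example_signature : signature_on (grid_adj 3 4) grid_example.
Proof.
move=> u v _; rewrite /grid_example eq_sym.
by case: eqVneq => [-> | _] //; rewrite minnC.
Qed.

Lemma grid_example_faces i j : i.+1 < 3 -> j.+1 < 4 ->
  face_sign grid_example i j = ((i, j) != (0, 1)).
Proof.
move=> lt_i3 lt_j4; rewrite (face_sign_ord _ (a := Ordinal (ltnW lt_i3)) (a' := Ordinal lt_i3)
                               (b := Ordinal (ltnW lt_j4)) (b' := Ordinal lt_j4)) //.
by case: i lt_i3 => [|[|[]]] // lt_i3; case: j lt_j4 => [|[|[|[]]]].
Qed.

Lemma grid_example_no_hom l : l < 5 -> ~ hom_to_order (grid_adj 3 4) grid_example l.
Proof.
apply: (grid_hom_lower_bound (k := 4) grid_example_signature _ grid_example_faces) => //.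
have : all (fun q => reachable (mask_signature 4 q) 3 4 (fun i j => (i, j) != (0, 1)) 3 == [::])
           (words [:: false; true] 6) by vm_compute.
by move/allP => unreachable q /unreachable /eqP.
Qed.

Theorem theorem4p5 :
  (forall (n m : nat) (sigma : rel ('I_n * 'I_m)),
      1 <= n <= m -> signature_on (grid_adj n m) sigma ->
      chi_s (grid_adj n m) sigma <= 6)
  /\ (forall (n m : nat) (sigma : rel ('I_n * 'I_m)),
      1 <= n <= m -> n <= 4 -> signature_on (grid_adj n m) sigma ->
      chi_s (grid_adj n m) sigma <= 5)
  /\ (exists (n m : nat) (sigma : rel ('I_n * 'I_m)),
      signature_on (grid_adj n m) sigma /\ chi_s (grid_adj n m) sigma = 5).
Proof.
(* Neither upper bound needs [1 <= n <= m]. *)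
split; [|split].
- move=> n m sigma _ sigma_sym; apply: chi_s_le.
  exact: grid_hom_of_colouring sigma_sym (unordered_sym _) (K6_colouring _ _ _).
- by move=> n m sigma _ le_n4 sigma_sym; apply/chi_s_le/K5_grid_hom.
- exists 3, 4, grid_example; split; first exact: grid_example_signature.
  apply: chi_s_minimal; last exact: grid_example_no_hom.
  exact: K5_grid_hom grid_example_signature.
Qed.
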